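(* Let $f:[a,b]\to\mathbb{C}$ be continuous and write $f=g+ih$ with $g,h:[a,b]\to\mathbb{R}$ its real and imaginary parts. If $h$ is Lipschitz on $[a,b]$, then $$\dim_H(G(g+ih))=\dim_H(G(g+h))=\dim_H(G((g,h)))=\dim_H(G(g)),$$ $$\overline{\dim}_B(G(g+ih))=\overline{\dim}_B(G(g+h))=\overline{\dim}_B(G((g,h)))=\overline{\dim}_B(G(g)),$$ $$\dim_P(G(g+ih))=\dim_P(G(g+h))=\dim_P(G((g,h)))=\dim_P(G(g)).$$
   Context: For a function $u$ on $[a,b]$, $G(u)=\{(x,u(x)):x\in[a,b]\}$ denotes its graph. The graph of the complex-valued $g+ih$ is a subset of $\mathbb{R}\times\mathbb{C}\cong\mathbb{R}^3$, the graph of the vector-valued $(g,h):[a,b]\to\mathbb{R}^2$ is a subset of $\mathbb{R}^3$, and graphs of real-valued functions $g$, $g+h$ are subsets of $\mathbb{R}^2$, all with Euclidean metrics. $\dim_H$, $\overline{\dim}_B$, $\dim_P$ denote Hausdorff, upper box and packing dimension. *)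

From HB Require Import structures.
From mathcomp Require Import all_boot all_order all_algebra.
From mathcomp Require Import all_classical all_reals all_analysis.
Set Implicit Arguments. Unset Strict Implicit. Unset Printing Implicit Defensive.
Import Order.TTheory GRing.Theory Num.Theory.
Local Open Scope classical_set_scope.
Local Open Scope ring_scope.

Section FractalDims.
Variables (R : realType) (n : nat).

Definition edist (x y : 'I_n -> R) : R :=
  Num.sqrt (\sum_(i < n) (x i - y i) ^+ 2).

(* Diameter (with diam set0 = 0). *)
Definition diam (A : set ('I_n -> R)) : \bar R :=
  ereal_sup ([set 0%E] `|` [set r | exists x y, A x /\ A y /\ r = (edist x y)%:E]).

(* |U|^s, with the convention that empty sets contribute 0. *)
Definition hterm (s : R) (U : set ('I_n -> R)) : \bar R :=
  if pselect (U = set0) then 0%E else poweR (diam U) s.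

Definition Hcontent (s delta : R) (A : set ('I_n -> R)) : \bar R :=
  ereal_inf [set (\sum_(0 <= i <oo) hterm s (U i))%E |
     U in [set U : nat -> set ('I_n -> R) |
       A `<=` \bigcup_i U i /\ forall i, (diam (U i) <= delta%:E)%E]].

(* Hausdorff s-dimensional measure H^s = lim_{delta -> 0} H^s_delta
   (= sup over delta > 0, since H^s_delta is nonincreasing in delta). *)
Definition Hmeasure (s : R) (A : set ('I_n -> R)) : \bar R :=
  ereal_sup [set Hcontent s d A | d in [set d : R | 0 < d]].

Definition hausdorff_dim (A : set ('I_n -> R)) : \bar R :=
  ereal_inf [set s%:E | s in [set s : R | 0 <= s /\ Hmeasure s A = 0%E]].

(* N_delta(A): least number of sets of diameter at most delta covering A
   (+oo if there is no finite such cover). *)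
Definition covnum (delta : R) (A : set ('I_n -> R)) : \bar R :=
  ereal_inf [set (k%:R)%:E | k in [set k : nat |
     exists U : nat -> set ('I_n -> R),
       A `<=` \bigcup_(i in [set i | (i < k)%N]) U i /\
       forall i, (i < k)%N -> (diam (U i) <= delta%:E)%E]].

Definition box_ratio (delta : R) (A : set ('I_n -> R)) : \bar R :=
  match covnum delta A with
  | r%:E => (ln r / (- ln delta))%:E
  | _ => +oo%E
  end.

(* Upper box dimension: limsup_{delta -> 0+} log N_delta(A) / (- log delta). *)
Definition upper_box_dim (A : set ('I_n -> R)) : \bar R :=
  ereal_inf [set ereal_sup [set box_ratio d A | d in [set d : R | 0 < d < e]]
            | e in [set e : R | 0 < e < 1]].

Definition cball (c : 'I_n -> R) (r : R) : set ('I_n -> R) :=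
  [set y | edist c y <= r].

Definition is_packing (delta : R) (A : set ('I_n -> R)) (J : set nat)
    (c : nat -> 'I_n -> R) (r : nat -> R) : Prop :=
  (forall i, J i -> A (c i) /\ 0 < r i <= delta) /\
  (forall i j, J i -> J j -> i <> j -> cball (c i) (r i) `&` cball (c j) (r j) = set0).

(* P^s_delta(A) = sup sum |B_i|^s over delta-packings (|B_i| = 2 r_i). *)
Definition Pdelta (s delta : R) (A : set ('I_n -> R)) : \bar R :=
  ereal_sup [set v | exists (J : set nat) (c : nat -> 'I_n -> R) (r : nat -> R),
    is_packing delta A J c r /\ v = (\esum_(i in J) (powR (2 * r i) s)%:E)%E].

(* P^s_0 = lim_{delta -> 0} P^s_delta (= inf over delta > 0). *)
Definition P0 (s : R) (A : set ('I_n -> R)) : \bar R :=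
  ereal_inf [set Pdelta s d A | d in [set d : R | 0 < d]].

Definition Pmeasure (s : R) (A : set ('I_n -> R)) : \bar R :=
  ereal_inf [set (\sum_(0 <= i <oo) P0 s (B i))%E |
     B in [set B : nat -> set ('I_n -> R) | A `<=` \bigcup_i B i]].

Definition packing_dim (A : set ('I_n -> R)) : \bar R :=
  ereal_inf [set s%:E | s in [set s : R | 0 <= s /\ Pmeasure s A = 0%E]].

End FractalDims.

Section Graphs.
Variable R : realType.

Definition pt2 (x y : R) : 'I_2 -> R := fun i => if val i == 0%N then x else y.
Definition pt3 (x y z : R) : 'I_3 -> R :=
  fun i => match val i with 0%N => x | 1%N => y | _ => z end.

Definition graph2 (a b : R) (u : R -> R) : set ('I_2 -> R) :=
  [set pt2 x (u x) | x in `[a, b]].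

Definition graph_vec (a b : R) (g h : R -> R) : set ('I_3 -> R) :=
  [set pt3 x (g x) (h x) | x in `[a, b]].

(* G(g + i h) subset of R x C, identified with R^3 via
   (x, z) |-> (x, Re z, Im z), an isometry for the Euclidean metrics. *)
Definition graph_cplx (a b : R) (g h : R -> R) : set ('I_3 -> R) :=
  [set pt3 x (g x) (h x) | x in `[a, b]].

End Graphs.

(* The graphs G(g + i h) = G((g, h)), G(g + h) and G(g) are images of one
   another under maps that are Lipschitz on them: (x, y, z) |-> (x, y) and
   (x, y, z) |-> (x, y + z) go down, (x, y) |-> (x, y, h x) and
   (x, y) |-> (x, y - h x, h x) go back up, the last two being Lipschitz because
   h is.  A Lipschitz image has no larger Hausdorff, upper box or packing
   dimension: H^s and P^s grow by at most a constant factor, and a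
   (delta / L)-cover of the set maps to a delta-cover of the image, which
   changes log N_delta / (- log delta) only by o(1) as delta -> 0. *)

From Pilot Require Import Defs.
From HB Require Import structures.
From mathcomp Require Import all_boot all_order all_algebra.
From mathcomp Require Import all_classical all_reals all_analysis.
From mathcomp Require Import ring lra.
Set Implicit Arguments. Unset Strict Implicit. Unset Printing Implicit Defensive.
Import Order.TTheory GRing.Theory Num.Theory numFieldNormedType.Exports.
Local Open Scope classical_set_scope.
Local Open Scope ring_scope.
(* The analysis library has its own [edist]; re-importing [Defs] makes
   [edist] denote the Euclidean distance of [Defs] again. *)
Import Defs.

Lemma sqrtr_le (R : rcfType) (x c : R) : 0 <= c -> x <= c ^+ 2 -> Num.sqrt x <= c.
Proof. by move=> c0 xc; apply: le_trans (ler_wsqrtr xc) _; rewrite sqrtr_sqr ger0_norm. Qed.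

Lemma sqrtr_le_mul (R : rcfType) (x y c : R) :
  1 <= c -> 0 <= y -> x <= c * y -> Num.sqrt x <= c * Num.sqrt y.
Proof.
move=> c1 y0 xy; have c0 := le_trans ler01 c1.
apply: sqrtr_le; first by rewrite mulr_ge0 ?sqrtr_ge0.
by rewrite exprMn sqr_sqrtr // (le_trans xy) // ler_wpM2r // expr2 ler_peMr.
Qed.

Lemma ln_nat_ge0 (R : realType) (k : nat) : 0 <= ln (k%:R : R).
Proof. by case: k => [|k]; [rewrite ln0 | rewrite ln_ge0 // ler1n]. Qed.

Lemma ler_ln_nat (R : realType) (j k : nat) : (j <= k)%N -> ln (j%:R : R) <= ln k%:R.
Proof.
case: j => [_|j jk]; first by rewrite ln0 ?ln_nat_ge0.
by rewrite ler_ln ?posrE ?ltr0n ?ler_nat // (leq_trans _ jk).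
Qed.

Lemma div_oppr_ln_le (R : realType) (c eps d : R) :
  0 <= c -> 0 < eps -> 0 < d < expR (- (c / eps)) -> c / - ln d <= eps.
Proof.
move=> c0 eps0 /andP[d0 dc].
have ced : c / eps < - ln d.
  by rewrite ltrNr -(expRK (- (c / eps))) ltr_ln ?posrE ?expR_gt0.
have lnd0 : 0 < - ln d by apply: le_lt_trans _ ced; rewrite divr_ge0 // ltW.
by move: ced; rewrite ltr_pdivrMr // ler_pdivrMr //; lra.
Qed.

Lemma lb_pmul_ereal_inf (R : realType) (c : R) (x : \bar R) (S : set (\bar R)) :
  0 < c -> (forall y, S y -> (x <= c%:E * y)%E) -> (x <= c%:E * ereal_inf S)%E.
Proof.
move=> c0 xS; rewrite -lee_pdivrMl //; apply: le_ereal_inf_tmp => y Sy.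
by rewrite lee_pdivrMl //; exact: xS.
Qed.

Lemma esumZl (R : realType) (J : set nat) (c : R) (f : nat -> \bar R) :
  0 <= c -> (forall i, (0 <= f i)%E) ->
  (\esum_(i in J) (c%:E * f i) = c%:E * \esum_(i in J) f i)%E.
Proof.
move=> c0 f0; have -> : J = [set i | `[< J i >]] by apply/funext => i /=; rewrite asboolE.
by rewrite -!nneseries_esum ?nneseriesZl // => i _; rewrite mule_ge0.
Qed.

Lemma ereal_inf_natP (R : realType) (P : set nat) :
  ereal_inf [set (k%:R : R)%:E | k in P] = +oo%E \/
  exists k : nat, ereal_inf [set (k%:R : R)%:E | k in P] = (k%:R)%:E.
Proof.
have [[k0 Pk0]|NP] := pselect (exists k, P k); last first.
  left; suff -> : P = set0 by rewrite image_set0 ereal_inf0.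
  by apply/seteqP; split=> // k Pk; apply: NP; exists k.
right; have Pex : exists k, `[< P k >] by exists k0; exact/asboolP.
case: (ex_minnP Pex) => k /asboolP Pk kmin; exists k.
apply/eqP; rewrite eq_le; apply/andP; split; first by apply: ereal_inf_lbound; exists k.
by apply: le_ereal_inf_tmp => _ [j Pj <-]; rewrite lee_fin ler_nat kmin //; exact/asboolP.
Qed.

Section EuclideanDistance.
Variables (R : realType) (n : nat).
Implicit Types x y z : 'I_n -> R.

Lemma edist_ge0 x y : 0 <= edist x y. Proof. exact: sqrtr_ge0. Qed.

Lemma edistC x y : edist x y = edist y x.
Proof.
by rewrite /edist; congr Num.sqrt; apply: eq_bigr => i _; rewrite -sqrrN opprB.
Qed.

Lemma edistxx x : edist x x = 0.
Proof. by rewrite /edist big1 ?sqrtr0 // => i _; rewrite subrr expr0n. Qed.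

Lemma sqr_edist x y : edist x y ^+ 2 = \sum_i (x i - y i) ^+ 2.
Proof. by rewrite sqr_sqrtr // sumr_ge0 // => i _; exact: sqr_ge0. Qed.

(* From (u + v)^2 <= 2 u^2 + 2 v^2 coordinatewise; the constant 2 is harmless
   for packings. *)
Lemma edist_le_quasi_triangle x y z : edist x y <= 2 * (edist x z + edist z y).
Proof.
have d1 := edist_ge0 x z; have d2 := edist_ge0 z y.
have coord i : (x i - y i) ^+ 2 <= 2 * (x i - z i) ^+ 2 + 2 * (z i - y i) ^+ 2.
  have -> : x i - y i = (x i - z i) + (z i - y i) by rewrite addrA subrK.
  by have := sqr_ge0 ((x i - z i) - (z i - y i)); nra.
apply: sqrtr_le; first by rewrite mulr_ge0 ?addr_ge0.
apply: le_trans (ler_sum _ (fun i _ => coord i)) _.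
rewrite big_split /= -!mulr_sumr -!sqr_edist; nra.
Qed.

Lemma cballI_neq0 x y (rx ry : R) :
  0 < rx -> 0 < ry -> 2 * edist x y <= rx + ry -> cball x rx `&` cball y ry <> set0.
Proof.
move=> rx0 ry0 xy I0; have d0 := edist_ge0 x y.
have [rxy|ryx] := leP rx ry.
- have : (cball x rx `&` cball y ry) x.
    by split; rewrite /cball /=; [rewrite edistxx ltW | rewrite edistC; lra].
  by rewrite I0.
- have : (cball x rx `&` cball y ry) y.
    by split; rewrite /cball /=; [lra | rewrite edistxx ltW].
  by rewrite I0.
Qed.

End EuclideanDistance.

Definition lipschitz_on (R : realType) (n m : nat) (phi : ('I_n -> R) -> 'I_m -> R)
    (A : set ('I_n -> R)) (L : R) :=
  forall x y, A x -> A y -> edist (phi x) (phi y) <= L * edist x y.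

Lemma lipschitz_on_max1 (R : realType) (n m : nat) (phi : ('I_n -> R) -> 'I_m -> R)
    (A : set ('I_n -> R)) (L : R) :
  lipschitz_on phi A L -> lipschitz_on phi A (Num.max L 1).
Proof.
move=> phiL x y Ax Ay; apply: le_trans (phiL x y Ax Ay) _.
by rewrite ler_wpM2r ?edist_ge0 // le_max lexx.
Qed.

Section Nonnegativity.
Variables (R : realType) (n : nat).
Implicit Types U : set ('I_n -> R).
Local Open Scope ereal_scope.

Lemma diam_ge0 U : 0 <= diam U.
Proof. by apply: ereal_sup_ubound; left. Qed.

Lemma edist_le_diam U x y : U x -> U y -> (edist x y)%:E <= diam U.
Proof. by move=> Ux Uy; apply: ereal_sup_ubound; right; exists x, y. Qed.

Lemma diam_le U (M : \bar R) : 0 <= M ->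
  (forall x y, U x -> U y -> (edist x y)%:E <= M) -> diam U <= M.
Proof. by move=> M0 UM; apply: ge_ereal_sup => _ [->|[x [y [Ux [Uy ->]]]]] //; exact: UM. Qed.

Lemma hterm_ge0 s U : 0 <= hterm s U.
Proof. by rewrite /hterm; destruct pselect; last exact: poweR_ge0. Qed.

Lemma Hcontent_ge0 s d U : 0 <= Hcontent s d U.
Proof.
apply: le_ereal_inf_tmp => _ [V _ <-].
by apply: nneseries_ge0 => i _ _; exact: hterm_ge0.
Qed.

Lemma Hmeasure_ge0 s U : 0 <= Hmeasure s U.
Proof.
apply: le_trans (Hcontent_ge0 s 1 U) _.
by apply: ereal_sup_ubound; exists 1%R => //=; exact: ltr01.
Qed.

Lemma Pdelta_ge0 s d U : 0 <= Pdelta s d U.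
Proof.
apply: ereal_sup_ubound; exists set0, (fun _ _ => 0%R), (fun _ => 0%R).
by split; [split|rewrite esum_set0].
Qed.

Lemma P0_ge0 s U : 0 <= P0 s U.
Proof. by apply: le_ereal_inf_tmp => _ [d _ <-]; exact: Pdelta_ge0. Qed.

Lemma Pmeasure_ge0 s U : 0 <= Pmeasure s U.
Proof.
apply: le_ereal_inf_tmp => _ [V _ <-].
by apply: nneseries_ge0 => i _ _; exact: P0_ge0.
Qed.

End Nonnegativity.

Section LipschitzImage.
Variables (R : realType) (n m : nat) (phi : ('I_n -> R) -> 'I_m -> R).
Variables (A : set ('I_n -> R)) (L : R).
Hypothesis L0 : 0 < L.
Hypothesis phiL : lipschitz_on phi A L.

Local Open Scope ereal_scope.

Lemma diam_lipschitz_image U : diam (phi @` (U `&` A)) <= L%:E * diam U.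
Proof.
apply: diam_le; first by rewrite mule_ge0 ?lee_fin ?(ltW L0) ?diam_ge0.
move=> _ _ [x [Ux Ax] <-] [y [Uy Ay] <-].
apply: (@le_trans _ _ (L * edist x y)%:E); first by rewrite lee_fin phiL.
by rewrite EFinM lee_wpmul2l ?lee_fin ?(ltW L0) ?edist_le_diam.
Qed.

Lemma hterm_lipschitz_image s d U : (0 <= s)%R -> diam U <= d%:E ->
  hterm s (phi @` (U `&` A)) <= (L `^ s)%:E * hterm s U.
Proof.
move=> s0 dU; rewrite {1}/hterm; destruct pselect as [V0|VN0].
  by rewrite mule_ge0 ?lee_fin ?powR_ge0 ?hterm_ge0.
rewrite /hterm; destruct pselect as [U0|UN0].
  by case: VN0; rewrite U0 set0I image_set0.
have := diam_lipschitz_image U; have := diam_ge0 (phi @` (U `&` A)).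
move: dU (diam_ge0 U); case: (diam U) => [du _ du0||] //; rewrite lee_fin in du0.
case: (diam _) => [dv dv0 dvL||] //=.
rewrite lee_fin in dv0; rewrite -EFinM lee_fin in dvL.
by rewrite -EFinM lee_fin -powRM ?(ltW L0) // ge0_ler_powR ?nnegrE ?mulr_ge0 ?(ltW L0).
Qed.

Lemma Hcontent_lipschitz_image s d : (0 <= s)%R ->
  Hcontent s d (phi @` A) <= (L `^ s)%:E * Hcontent s (d / L) A.
Proof.
move=> s0; apply: lb_pmul_ereal_inf; first exact: powR_gt0.
move=> _ [U [AU dU] <-].
apply: ge_ereal_inf; exists (\sum_(0 <= i <oo) hterm s (phi @` (U i `&` A))).
  exists (fun i => phi @` (U i `&` A)) => //; split.
    by move=> _ [x Ax <-]; have [i _ Uix] := AU x Ax; exists i => //; exists x.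
  move=> i; apply: le_trans (diam_lipschitz_image (U i)) _.
  by rewrite -(divfK (lt0r_neq0 L0) d) mulrC EFinM lee_wpmul2l ?lee_fin ?(ltW L0).
rewrite -nneseriesZl; last by move=> i _; exact: hterm_ge0.
apply: lee_nneseries => [i _ _|i _]; first exact: hterm_ge0.
exact: (hterm_lipschitz_image _ (dU i)).
Qed.

Lemma Hmeasure_lipschitz_image s : (0 <= s)%R ->
  Hmeasure s (phi @` A) <= (L `^ s)%:E * Hmeasure s A.
Proof.
move=> s0; apply: ge_ereal_sup => _ [d d0 <-].
apply: le_trans (Hcontent_lipschitz_image d s0) _.
rewrite lee_wpmul2l ?lee_fin ?powR_ge0 //.
by apply: ereal_sup_ubound; exists (d / L)%R; rewrite //= divr_gt0.
Qed.

Lemma hausdorff_dim_lipschitz_image : hausdorff_dim (phi @` A) <= hausdorff_dim A.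
Proof.
apply: ereal_inf_le_tmp => _ [s [s0 As0] <-]; exists s => //; split => //.
apply/eqP; rewrite eq_le Hmeasure_ge0 andbT.
by apply: le_trans (Hmeasure_lipschitz_image s0) _; rewrite As0 mule0.
Qed.

Let K := (4 * L)%R.
Let K0 : (0 < K)%R. Proof. by rewrite mulr_gt0. Qed.

(* With [K = 4 L], a common point of two shrunk balls puts the image centres
   within [(r i + r j) / 2] of each other, so the image balls would meet. *)
Lemma packing_lipschitz_preimage d B J c r (c' : nat -> 'I_n -> R) :
  is_packing (d * K) (phi @` (B `&` A)) J c r ->
  (forall i, J i -> [/\ B (c' i), A (c' i) & phi (c' i) = c i]) ->
  is_packing d B J c' (fun i => r i / K)%R.
Proof.
move=> [cJ disj] c'J; split=> [i Ji|i j Ji Jj ij].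
  have [_ /andP[r0 rdK]] := cJ i Ji; have [Bi _ _] := c'J i Ji.
  by split=> //; rewrite divr_gt0 ?ler_pdivrMr.
apply/seteqP; split=> // z [zi zj]; move: (disj i j Ji Jj ij).
have [_ /andP[ri0 _]] := cJ i Ji; have [_ /andP[rj0 _]] := cJ j Jj.
have [_ Ai <-] := c'J i Ji; have [_ Aj <-] := c'J j Jj.
apply: cballI_neq0 => //.
rewrite /cball /= ler_pdivlMr // in zi; rewrite /cball /= edistC ler_pdivlMr // in zj.
have := ler_wpM2l (ltW L0) (edist_le_quasi_triangle (c' i) (c' j) z).
have := phiL Ai Aj; rewrite /K in zi zj; lra.
Qed.

Lemma Pdelta_lipschitz_image s d B : (0 <= s)%R ->
  Pdelta s (d * K) (phi @` (B `&` A)) <= (K `^ s)%:E * Pdelta s d B.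
Proof.
move=> s0; apply: ge_ereal_sup => _ [J [c [r [pack ->]]]].
have [c' c'J] : {c' : nat -> 'I_n -> R &
    forall i, J i -> [/\ B (c' i), A (c' i) & phi (c' i) = c i]}.
  apply: (@choice _ _ (fun i x => J i -> [/\ B x, A x & phi x = c i])) => i.
  have [Ji|NJi] := pselect (J i); last by exists 0%R.
  by have [[x [Bx Ax] <-] _] := pack.1 i Ji; exists x.
apply: (@le_trans _ _ ((K `^ s)%:E * \esum_(i in J) ((2 * (r i / K)) `^ s)%:E)).
  rewrite -esumZl ?powR_ge0 // => [|i]; last by rewrite lee_fin powR_ge0.
  apply: le_esum => i Ji; have [_ /andP[r0 _]] := pack.1 i Ji.
  have rK0 : (0 <= 2 * (r i / K))%R by rewrite mulr_ge0 ?divr_ge0 ?(ltW r0) ?(ltW K0).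
  rewrite -EFinM -powRM ?(ltW K0) //.
  by rewrite mulrCA [(K * _)%R]mulrC divfK ?lt0r_neq0.
rewrite lee_wpmul2l ?lee_fin ?powR_ge0 //; apply: ereal_sup_ubound.
by exists J, c', (fun i => r i / K)%R; split=> //; exact: (packing_lipschitz_preimage pack c'J).
Qed.

Lemma P0_lipschitz_image s B : (0 <= s)%R ->
  P0 s (phi @` (B `&` A)) <= (K `^ s)%:E * P0 s B.
Proof.
move=> s0; apply: lb_pmul_ereal_inf; first exact: powR_gt0.
move=> _ [d d0 <-]; apply: le_trans (Pdelta_lipschitz_image d B s0).
by apply: ereal_inf_lbound; exists (d * K)%R; rewrite //= mulr_gt0.
Qed.

Lemma Pmeasure_lipschitz_image s : (0 <= s)%R ->
  Pmeasure s (phi @` A) <= (K `^ s)%:E * Pmeasure s A.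
Proof.
move=> s0; apply: lb_pmul_ereal_inf; first exact: powR_gt0.
move=> _ [B AB <-].
apply: ge_ereal_inf; exists (\sum_(0 <= i <oo) P0 s (phi @` (B i `&` A))).
  exists (fun i => phi @` (B i `&` A)) => //.
  by move=> _ [x Ax <-]; have [i _ Bix] := AB x Ax; exists i => //; exists x.
rewrite -nneseriesZl; last by move=> i _; exact: P0_ge0.
apply: lee_nneseries => [i _ _|i _]; first exact: P0_ge0.
exact: P0_lipschitz_image.
Qed.

Lemma packing_dim_lipschitz_image : packing_dim (phi @` A) <= packing_dim A.
Proof.
apply: ereal_inf_le_tmp => _ [s [s0 As0] <-]; exists s => //; split => //.
apply/eqP; rewrite eq_le Pmeasure_ge0 andbT.
by apply: le_trans (Pmeasure_lipschitz_image s0) _; rewrite As0 mule0.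
Qed.

End LipschitzImage.

Lemma covnum_natP (R : realType) (n : nat) (d : R) (X : set ('I_n -> R)) :
  covnum d X = +oo%E \/ exists k : nat, covnum d X = (k%:R)%:E.
Proof. exact: ereal_inf_natP. Qed.

Lemma box_ratio_ge0 (R : realType) (n : nat) (d : R) (X : set ('I_n -> R)) :
  0 < d < 1 -> (0 <= box_ratio d X)%E.
Proof.
move=> /andP[d0 d1]; rewrite /box_ratio.
case: (covnum_natP d X) => [->|[k ->]] //.
by rewrite lee_fin divr_ge0 ?ln_nat_ge0 // oppr_ge0 ltW // ln_lt0 // d0 d1.
Qed.

Lemma upper_box_dim_ge0 (R : realType) (n : nat) (X : set ('I_n -> R)) :
  (0 <= upper_box_dim X)%E.
Proof.
apply: le_ereal_inf_tmp => _ [e /andP[e0 e1] <-].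
have e2 : 0 < e / 2 < 1 by apply/andP; split; lra.
apply: le_trans (box_ratio_ge0 X e2) _.
apply: ereal_sup_ubound; exists (e / 2) => //=.
by apply/andP; split; lra.
Qed.

Section BoxLipschitzImage.
Variables (R : realType) (n m : nat) (phi : ('I_n -> R) -> 'I_m -> R).
Variables (A : set ('I_n -> R)) (L : R).
Hypothesis L1 : 1 <= L.
Hypothesis phiL : lipschitz_on phi A L.

Let L0 : 0 < L. Proof. exact: lt_le_trans L1. Qed.

Lemma covnum_lipschitz_image d : (covnum (L * d) (phi @` A) <= covnum d A)%E.
Proof.
apply: ereal_inf_le_tmp => _ [k [U [AU dU]] <-]; exists k => //.
exists (fun i => phi @` (U i `&` A)); split.
  by move=> _ [x Ax <-]; have [i ik Uix] := AU x Ax; exists i => //; exists x.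
move=> i ik; apply: le_trans (diam_lipschitz_image L0 phiL (U i)) _.
by rewrite EFinM lee_wpmul2l ?lee_fin ?(ltW L0) ?dU.
Qed.

(* A cover of [A] by [d / L]-sets maps to a cover of the image by [d]-sets, and
   [- ln (d / L) = - ln d + ln L]. *)
Lemma box_ratio_lipschitz_image d q : 0 < d < 1 -> (box_ratio (d / L) A <= q%:E)%E ->
  (box_ratio d (phi @` A) <= (q + q * ln L / - ln d)%:E)%E.
Proof.
move=> /andP[d0 d1]; have dL0 : 0 < d / L by rewrite divr_gt0.
have t0 : 0 < - ln d by rewrite oppr_gt0 ln_lt0 // d0 d1.
have lndL : ln (d / L) = ln d - ln L by rewrite lnM ?posrE ?invr_gt0 // lnV ?posrE.
have := covnum_lipschitz_image (d / L); rewrite mulrC divfK ?lt0r_neq0 //.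
rewrite /box_ratio; case: (covnum_natP (d / L) A) => [->|[k2 ->]]; first by rewrite leye_eq.
case: (covnum_natP d (phi @` A)) => [->|[k1 ->]]; first by rewrite leye_eq.
rewrite !lee_fin ler_nat => /(ler_ln_nat R) k12.
rewrite lndL ler_pdivrMr; last by have := ln_ge0 L1; lra.
by rewrite ler_pdivrMr // mulrDl divfK ?lt0r_neq0 //; lra.
Qed.

Lemma upper_box_dim_lipschitz_image :
  (upper_box_dim (phi @` A) <= upper_box_dim A)%E.
Proof.
move: (upper_box_dim_ge0 A); case EA: (upper_box_dim A) => [u||] // u0; last by rewrite leey.
rewrite lee_fin in u0; apply/lee_addgt0Pr => eps eps0.
pose q := u + eps / 2.
have /ereal_inf_lt [_ [e /andP[e0 e1] <-] ratioA] : (upper_box_dim A < q%:E)%E.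
  by rewrite EA lte_fin /q; lra.
pose e' := Num.min e (expR (- (q * ln L / (eps / 2)))).
have e'e : e' <= e by rewrite ge_min lexx.
apply: (@le_trans _ _ (ereal_sup [set box_ratio d (phi @` A) | d in [set d | 0 < d < e']])).
  apply: ereal_inf_lbound; exists e' => //.
  by rewrite /= (le_lt_trans e'e e1) /e' lt_min e0 expR_gt0.
apply: ge_ereal_sup => _ [d /andP[d0 de'] <-].
have d1 : d < 1 by rewrite (lt_le_trans de') // (le_trans e'e) // ltW.
have dLd : d / L <= d by rewrite ler_pdivrMr // ler_peMr // ltW.
have ratio : (box_ratio (d / L) A <= q%:E)%E.
  apply: le_trans (ltW ratioA); apply: ereal_sup_ubound; exists (d / L) => //.
  by rewrite /= divr_gt0 //= (le_lt_trans dLd) // (lt_le_trans de').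
apply: le_trans (box_ratio_lipschitz_image (d := d) _ ratio) _; first by rewrite d0.
have : q * ln L / - ln d <= eps / 2.
  apply: div_oppr_ln_le; rewrite ?mulr_ge0 ?ln_ge0 ?divr_gt0 ?d0 //=; first by rewrite /q; lra.
  by rewrite (lt_le_trans de') // ge_min lexx orbT.
by rewrite lee_fin /q; lra.
Qed.

End BoxLipschitzImage.

Lemma dims_eq_of_lipschitz_surjections (R : realType) (n m : nat)
    (X : set ('I_n -> R)) (Y : set ('I_m -> R))
    (f : ('I_n -> R) -> 'I_m -> R) (g : ('I_m -> R) -> 'I_n -> R) (Lf Lg : R) :
  lipschitz_on f X Lf -> lipschitz_on g Y Lg -> f @` X = Y -> g @` Y = X ->
  [/\ hausdorff_dim X = hausdorff_dim Y, upper_box_dim X = upper_box_dim Y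
    & packing_dim X = packing_dim Y].
Proof.
move=> /lipschitz_on_max1 fL /lipschitz_on_max1 gL fXY gYX.
have Lf1 : 1 <= Num.max Lf 1 by rewrite le_max lexx orbT.
have Lg1 : 1 <= Num.max Lg 1 by rewrite le_max lexx orbT.
have Lf0 := lt_le_trans ltr01 Lf1; have Lg0 := lt_le_trans ltr01 Lg1.
have := hausdorff_dim_lipschitz_image Lf0 fL; have := hausdorff_dim_lipschitz_image Lg0 gL.
have := upper_box_dim_lipschitz_image Lf1 fL; have := upper_box_dim_lipschitz_image Lg1 gL.
have := packing_dim_lipschitz_image Lf0 fL; have := packing_dim_lipschitz_image Lg0 gL.
rewrite fXY gYX => PYX PXY BYX BXY HYX HXY.
by split; apply: le_anti; rewrite ?PYX ?PXY ?BYX ?BXY ?HYX ?HXY.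
Qed.

Section Graphs.
Variables (R : realType) (a b : R) (g h : R -> R).

Lemma edist_pt2 (x y x' y' : R) :
  edist (pt2 x y) (pt2 x' y') = Num.sqrt ((x - x') ^+ 2 + (y - y') ^+ 2).
Proof. by rewrite /edist !big_ord_recl big_ord0 addr0. Qed.

Lemma edist_pt3 (x y z x' y' z' : R) :
  edist (pt3 x y z) (pt3 x' y' z') =
  Num.sqrt ((x - x') ^+ 2 + (y - y') ^+ 2 + (z - z') ^+ 2).
Proof. by rewrite /edist !big_ord_recl big_ord0 addr0 addrA. Qed.

Local Notation i0 := (@Ordinal 3 0%N isT).
Local Notation i1 := (@Ordinal 3 1%N isT).
Local Notation i2 := (@Ordinal 3 2%N isT).
Local Notation j0 := (@Ordinal 2 0%N isT).
Local Notation j1 := (@Ordinal 2 1%N isT).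

Definition drop_z (v : 'I_3 -> R) : 'I_2 -> R := pt2 (v i0) (v i1).
Definition add_yz (v : 'I_3 -> R) : 'I_2 -> R := pt2 (v i0) (v i1 + v i2).
Definition lift_h (w : 'I_2 -> R) : 'I_3 -> R := pt3 (w j0) (w j1) (h (w j0)).
Definition split_h (w : 'I_2 -> R) : 'I_3 -> R := pt3 (w j0) (w j1 - h (w j0)) (h (w j0)).

Lemma image_proj12 : drop_z @` graph_vec a b g h = graph2 a b g.
Proof.
apply/seteqP; split=> [_ [_ [x xab <-] <-]|_ [x xab <-]]; first by exists x.
by exists (pt3 x (g x) (h x)); first by exists x.
Qed.

Lemma image_sum23 : add_yz @` graph_vec a b g h = graph2 a b (g \+ h).
Proof.
apply/seteqP; split=> [_ [_ [x xab <-] <-]|_ [x xab <-]]; first by exists x.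
by exists (pt3 x (g x) (h x)); first by exists x.
Qed.

Lemma image_lift_h : lift_h @` graph2 a b g = graph_vec a b g h.
Proof.
apply/seteqP; split=> [_ [_ [x xab <-] <-]|_ [x xab <-]]; first by exists x.
by exists (pt2 x (g x)); first by exists x.
Qed.

Lemma image_unsum_h : split_h @` graph2 a b (g \+ h) = graph_vec a b g h.
Proof.
apply/seteqP; split=> [_ [_ [x xab <-] <-]|_ [x xab <-]].
  by exists x => //; rewrite /split_h /= addrK.
by exists (pt2 x ((g \+ h) x)); [exists x | rewrite /split_h /= addrK].
Qed.

Lemma drop_z_lipschitz : lipschitz_on drop_z (graph_vec a b g h) 1.
Proof.
move=> _ _ [x _ <-] [y _ <-]; rewrite /drop_z edist_pt2 edist_pt3 /pt2 /pt3 /=.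
by apply: sqrtr_le_mul; rewrite ?addr_ge0 ?sqr_ge0 // mul1r lerDl sqr_ge0.
Qed.

Lemma add_yz_lipschitz : lipschitz_on add_yz (graph_vec a b g h) 2.
Proof.
move=> _ _ [x _ <-] [y _ <-]; rewrite /add_yz edist_pt2 edist_pt3 /pt2 /pt3 /=.
apply: sqrtr_le_mul; rewrite ?ler1n ?addr_ge0 ?sqr_ge0 //.
have -> : g x + h x - (g y + h y) = (g x - g y) + (h x - h y) by ring.
have := sqr_ge0 (g x - g y - (h x - h y)); have := sqr_ge0 (x - y).
have := sqr_ge0 (g x - g y); have := sqr_ge0 (h x - h y); nra.
Qed.

Variable L : R.
Hypothesis h_lip : forall x y, x \in `[a, b] -> y \in `[a, b] ->
  `|h x - h y| <= L * `|x - y|.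

Lemma sqr_h_lip x y : x \in `[a, b] -> y \in `[a, b] ->
  (h x - h y) ^+ 2 <= L ^+ 2 * (x - y) ^+ 2.
Proof.
move=> xab yab; have hxy := h_lip xab yab.
rewrite -[(h x - h y) ^+ 2]real_normK ?num_real // -[(x - y) ^+ 2]real_normK ?num_real //.
have := normr_ge0 (h x - h y); have := normr_ge0 (x - y); nra.
Qed.

Lemma lift_h_lipschitz : lipschitz_on lift_h (graph2 a b g) (1 + L ^+ 2).
Proof.
move=> _ _ [x xab <-] [y yab <-]; rewrite /lift_h edist_pt2 edist_pt3 /pt2 /pt3 /=.
apply: sqrtr_le_mul; rewrite ?lerDl ?addr_ge0 ?sqr_ge0 //.
have := sqr_h_lip xab yab; have := sqr_ge0 (x - y); have := sqr_ge0 (g x - g y).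
have := sqr_ge0 L; nra.
Qed.

Lemma split_h_lipschitz : lipschitz_on split_h (graph2 a b (g \+ h)) (2 + 3 * L ^+ 2).
Proof.
move=> _ _ [x xab <-] [y yab <-]; rewrite /split_h edist_pt2 edist_pt3 /pt2 /pt3 /=.
apply: sqrtr_le_mul; rewrite ?addr_ge0 ?sqr_ge0 //; first by have := sqr_ge0 L; lra.
have -> : g x + h x - h x - (g y + h y - h y) = (g x + h x - (g y + h y)) - (h x - h y) by ring.
have := sqr_h_lip xab yab; have := sqr_ge0 (x - y); have := sqr_ge0 (g x + h x - (g y + h y)).
have := sqr_ge0 (g x + h x - (g y + h y) + (h x - h y)); have := sqr_ge0 L; nra.
Qed.

End Graphs.

Theorem mainTheorem4 (R : realType) (a b : R) (g h : R -> R) :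
  a < b ->
  {within `[a, b], continuous g} ->
  {within `[a, b], continuous h} ->
  (exists L : R, forall x y, x \in `[a, b] -> y \in `[a, b] ->
      `|h x - h y| <= L * `|x - y|) ->
  ((hausdorff_dim (graph_cplx a b g h) = hausdorff_dim (graph2 a b (g \+ h))) /\
   (hausdorff_dim (graph2 a b (g \+ h)) = hausdorff_dim (graph_vec a b g h)) /\
   (hausdorff_dim (graph_vec a b g h) = hausdorff_dim (graph2 a b g)) /\
   (upper_box_dim (graph_cplx a b g h) = upper_box_dim (graph2 a b (g \+ h))) /\
   (upper_box_dim (graph2 a b (g \+ h)) = upper_box_dim (graph_vec a b g h)) /\
   (upper_box_dim (graph_vec a b g h) = upper_box_dim (graph2 a b g)) /\
   (packing_dim (graph_cplx a b g h) = packing_dim (graph2 a b (g \+ h))) /\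
   (packing_dim (graph2 a b (g \+ h)) = packing_dim (graph_vec a b g h)) /\
   (packing_dim (graph_vec a b g h) = packing_dim (graph2 a b g))).
Proof.
move=> _ _ _ [L h_lip].
have [Hsum Bsum Psum] := dims_eq_of_lipschitz_surjections (@add_yz_lipschitz _ a b g h)
  (split_h_lipschitz h_lip) (@image_sum23 _ a b g h) (@image_unsum_h _ a b g h).
have [Hg Bg Pg] := dims_eq_of_lipschitz_surjections (@drop_z_lipschitz _ a b g h)
  (lift_h_lipschitz h_lip) (@image_proj12 _ a b g h) (@image_lift_h _ a b g h).
have -> : graph_cplx a b g h = graph_vec a b g h by [].
by rewrite -Hsum Hg -Bsum Bg -Psum Pg.
Qed.
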